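(* Let $s\ge1$, let $P_0(\xi)$ be an $s$-hypoelliptic polynomial on $\mathbb{R}^d$ of order $m$, and let $P_0,P_1,\dots,P_r$ be a basis of the (finite-dimensional) vector space of polynomials weaker than $P_0$. Let $P=\sum_{j=0}^rc_j(x)P_j(D/2\pi)$ with symbol $p(x,\xi)=\sum_{j=0}^rc_j(x)P_j(\xi)$, where $c_j\in G^1_{ap}(\mathbb{R}^d)$ for $j=0,\dots,r$, and assume there exist $\epsilon>0$, $A\ge0$ such that $|p(x,\xi)|\ge\epsilon|P_0(\xi)|$ for all $|\xi|\ge A$ and $x\in\mathbb{R}^d$. Then $P$ has constant strength.
   Context: $D=-i\nabla$, so $P_j(D/2\pi)$ is the constant-coefficient differential operator whose symbol (with respect to $e^{2\pi i x\cdot\xi}$) is $P_j(\xi)$. A polynomial $Q(\xi)$ on $\mathbb{R}^d$ is $s$-hypoelliptic ($1\le s<\infty$) if for some $\rho$ with $0<\rho\le1$, $\rho\ge1/s$, and constants $C>0$, $A\ge0$: $|\partial^\beta Q(\xi)|\le C|Q(\xi)|(1+|\xi|)^{-\rho|\beta|}$ for all $\beta\in\mathbb{N}^d$ and $|\xi|\ge A$. For a polynomial $Q$ set $\tilde Q(\xi)=(\sum_{\alpha\in\mathbb{N}^d}|\partial^\alpha Q(\xi)|^2)^{1/2}$. $Q$ is weaker than $P$ if $\tilde Q(\xi)\le C\tilde P(\xi)$ for all $\xi$ and some $C>0$; $P,Q$ are equally strong if each is weaker than the other. A differential operator with symbol $p(x,\xi)$ has constant strength if $p(x,\cdot)$ and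 $p(y,\cdot)$ are equally strong for all $x,y\in\mathbb{R}^d$. $G^1_{ap}(\mathbb{R}^d)$ is the set of $f\in C^\infty(\mathbb{R}^d)$ such that every $\partial^\alpha f$ is (Bohr) uniformly almost periodic and for some $C>0$, $|\partial^\alpha f(x)|\le C^{1+|\alpha|}\alpha!$ for all $x\in\mathbb{R}^d$, $\alpha\in\mathbb{N}^d$. *)

From Stdlib Require Import Reals Lra Lia Arith.
From Stdlib Require Fin.
Open Scope R_scope.

Definition Cx := (R * R)%type.
Definition C0 : Cx := (0, 0).
Definition Cadd (a b : Cx) : Cx := (fst a + fst b, snd a + snd b).
Definition Csub (a b : Cx) : Cx := (fst a - fst b, snd a - snd b).
Definition Cmul (a b : Cx) : Cx :=
  (fst a * fst b - snd a * snd b, fst a * snd b + snd a * fst b).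
Definition Cscale (t : R) (a : Cx) : Cx := (t * fst a, t * snd a).
Definition Cnorm (a : Cx) : R := sqrt (fst a ^ 2 + snd a ^ 2).

Definition Rd (d : nat) := Fin.t d -> R.
Definition mindex (d : nat) := Fin.t d -> nat.

Fixpoint fin_fold {A : Type} (op : A -> A -> A) (z : A) (d : nat)
  : (Fin.t d -> A) -> A :=
  match d return (Fin.t d -> A) -> A with
  | O => fun _ => z
  | S d' => fun f => op (f Fin.F1) (fin_fold op z d' (fun i => f (Fin.FS i)))
  end.

Definition fin_sumR d (f : Fin.t d -> R) : R := fin_fold Rplus 0 d f.
Definition fin_prodR d (f : Fin.t d -> R) : R := fin_fold Rmult 1 d f.
Definition fin_sumN d (f : Fin.t d -> nat) : nat := fin_fold Nat.add 0%nat d f.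

Definition vnorm {d} (x : Rd d) : R := sqrt (fin_sumR d (fun i => x i ^ 2)).
Definition vadd {d} (x y : Rd d) : Rd d := fun i => x i + y i.
Definition vsub {d} (x y : Rd d) : Rd d := fun i => x i - y i.
Definition update {d} (x : Rd d) (i : Fin.t d) (t : R) : Rd d :=
  fun j => if Fin.eq_dec i j then t else x j.

Definition mzero {d} : mindex d := fun _ => 0%nat.
Definition madd {d} (a b : mindex d) : mindex d := fun i => (a i + b i)%nat.
Definition munit {d} (i : Fin.t d) : mindex d :=
  fun j => if Fin.eq_dec i j then 1%nat else 0%nat.
Definition mlen {d} (a : mindex d) : nat := fin_sumN d a.
Definition mfact {d} (a : mindex d) : R := fin_prodR d (fun i => INR (fact (a i))).
Definition mono {d} (x : Rd d) (a : mindex d) : R := fin_prodR d (fun i => x i ^ a i).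

Definition mcons {d} (k : nat) (b : mindex d) : mindex (S d) :=
  fun i => Fin.caseS' i (fun _ => nat) k b.

Fixpoint sum_upto {A : Type} (add : A -> A -> A) (N : nat) (f : nat -> A) : A :=
  match N with
  | O => f O
  | S n => add (sum_upto add n f) (f (S n))
  end.

(** Sum over all multi-indices in the box [0,N]^d *)
Fixpoint box_sum {A : Type} (add : A -> A -> A) (d N : nat)
  : (mindex d -> A) -> A :=
  match d return (mindex d -> A) -> A with
  | O => fun F => F (fun i => Fin.case0 (fun _ => nat) i)
  | S d' => fun F => sum_upto add N (fun k => box_sum add d' N (fun b => F (mcons k b)))
  end.

Record mpoly (d : nat) := mkPoly {
  pcoef : mindex d -> Cx;
  pbound : nat;
  pcoef_bound : forall a : mindex d, (exists i, (pbound < a i)%nat) -> pcoef a = C0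
}.
Arguments pcoef {d} _ _.
Arguments pbound {d} _.

Definition peval {d} (Q : mpoly d) (xi : Rd d) : Cx :=
  box_sum Cadd d (pbound Q) (fun a => Cscale (mono xi a) (pcoef Q a)).

Definition pderiv_coef {d} (a : mindex d) (Q : mpoly d) (b : mindex d) : Cx :=
  Cscale (fin_prodR d (fun i => INR (fact (a i + b i)) / INR (fact (b i))))
         (pcoef Q (madd a b)).

Lemma pderiv_coef_bound {d} (a : mindex d) (Q : mpoly d) :
  forall b, (exists i, (pbound Q < b i)%nat) -> pderiv_coef a Q b = C0.
Proof.
  intros b [i Hi]. unfold pderiv_coef.
  rewrite (pcoef_bound d Q (madd a b)).
  - unfold Cscale, C0; simpl; f_equal; ring.
  - exists i. unfold madd. lia.
Qed.

Definition pderiv {d} (a : mindex d) (Q : mpoly d) : mpoly d :=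
  mkPoly d (pderiv_coef a Q) (pbound Q) (pderiv_coef_bound a Q).

(** Q~(xi) = ( sum_a |d^a Q(xi)|^2 )^(1/2); derivatives with some a_i > bound vanish *)
Definition ptilde {d} (Q : mpoly d) (xi : Rd d) : R :=
  sqrt (box_sum Rplus d (pbound Q) (fun a => Cnorm (peval (pderiv a Q) xi) ^ 2)).

Definition weaker {d} (Q P : mpoly d) : Prop :=
  exists K, K > 0 /\ forall xi, ptilde Q xi <= K * ptilde P xi.

Definition equally_strong {d} (P Q : mpoly d) : Prop := weaker P Q /\ weaker Q P.

Definition poly_order {d} (Q : mpoly d) (m : nat) : Prop :=
  (exists a, mlen a = m /\ pcoef Q a <> C0) /\
  (forall a, pcoef Q a <> C0 -> (mlen a <= m)%nat).

Definition s_hypoelliptic {d} (s : R) (Q : mpoly d) : Prop :=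
  exists rho Cc A, 0 < rho /\ rho <= 1 /\ rho >= 1 / s /\ Cc > 0 /\ A >= 0 /\
    forall (b : mindex d) (xi : Rd d), vnorm xi >= A ->
      Cnorm (peval (pderiv b Q) xi)
        <= Cc * Cnorm (peval Q xi) * Rpower (1 + vnorm xi) (- rho * INR (mlen b)).

Definition lincomb_coef {d} (r : nat) (a : nat -> Cx) (P : nat -> mpoly d) (b : mindex d) : Cx :=
  sum_upto Cadd r (fun j => Cmul (a j) (pcoef (P j) b)).

Definition basis_of_weaker {d} (r : nat) (P : nat -> mpoly d) : Prop :=
  (forall j, (j <= r)%nat -> weaker (P j) (P O)) /\
  (forall a : nat -> Cx, (forall b, lincomb_coef r a P b = C0) ->
      forall j, (j <= r)%nat -> a j = C0) /\
  (forall Q : mpoly d, weaker Q (P O) ->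
      exists a : nat -> Cx, forall b, pcoef Q b = lincomb_coef r a P b).

Definition maxbound {d} (r : nat) (P : nat -> mpoly d) : nat :=
  sum_upto Nat.max r (fun j => pbound (P j)).

Lemma maxbound_ge {d} (r : nat) (P : nat -> mpoly d) :
  forall j, (j <= r)%nat -> (pbound (P j) <= maxbound r P)%nat.
Proof.
  unfold maxbound. induction r as [|r IH]; intros j Hj; simpl.
  - replace j with O by lia. lia.
  - destruct (Nat.eq_dec j (S r)) as [->|Hne].
    + lia.
    + specialize (IH j ltac:(lia)). lia.
Qed.

Lemma symbol_coef_bound {d} (r : nat) (a : nat -> Cx) (P : nat -> mpoly d) :
  forall b, (exists i, (maxbound r P < b i)%nat) -> lincomb_coef r a P b = C0.
Proof.
  intros b [i Hi]. unfold lincomb_coef.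
  assert (H : forall n, (n <= r)%nat ->
            sum_upto Cadd n (fun j => Cmul (a j) (pcoef (P j) b)) = C0).
  { induction n as [|n IH]; intros Hn; simpl.
    - rewrite (pcoef_bound d (P O) b).
      + unfold Cmul, C0; simpl; f_equal; ring.
      + exists i. pose proof (maxbound_ge r P O ltac:(lia)). lia.
    - rewrite IH by lia. rewrite (pcoef_bound d (P (S n)) b).
      + unfold Cadd, Cmul, C0; simpl; f_equal; ring.
      + exists i. pose proof (maxbound_ge r P (S n) Hn). lia. }
  apply H; lia.
Qed.

Definition symbol {d} (r : nat) (c : nat -> Rd d -> Cx) (P : nat -> mpoly d) (x : Rd d)
  : mpoly d :=
  mkPoly d (lincomb_coef r (fun j => c j x) P) (maxbound r P)
         (symbol_coef_bound r (fun j => c j x) P).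

Definition Ccontinuous {d} (f : Rd d -> Cx) : Prop :=
  forall x eps, eps > 0 -> exists delta, delta > 0 /\
    forall y, vnorm (vsub y x) < delta -> Cnorm (Csub (f y) (f x)) < eps.

Definition bohr_ap {d} (f : Rd d -> Cx) : Prop :=
  Ccontinuous f /\
  forall eps, eps > 0 -> exists L, L > 0 /\
    forall a : Rd d, exists tau : Rd d, vnorm (vsub tau a) <= L /\
      forall x, Cnorm (Csub (f (vadd x tau)) (f x)) <= eps.

(** F b is the partial derivative d^b f; smoothness expressed by the existence
    of the whole family of iterated partial derivatives (real & imaginary parts). *)
Definition partial_family {d} (f : Rd d -> Cx) (F : mindex d -> Rd d -> Cx) : Prop :=
  F mzero = f /\
  forall (b : mindex d) (i : Fin.t d) (x : Rd d),
    derivable_pt_lim (fun t => fst (F b (update x i t))) (x i) (fst (F (madd b (munit i)) x)) /\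
    derivable_pt_lim (fun t => snd (F b (update x i t))) (x i) (snd (F (madd b (munit i)) x)).

Definition G1ap {d} (f : Rd d -> Cx) : Prop :=
  exists F : mindex d -> Rd d -> Cx,
    partial_family f F /\
    (forall b, bohr_ap (F b)) /\
    exists K, K > 0 /\ forall b x, Cnorm (F b x) <= K ^ (1 + mlen b) * mfact b.

Definition constant_strength {d} (p : Rd d -> mpoly d) : Prop :=
  forall x y, equally_strong (p x) (p y).

(** A linear combination of polynomials weaker than [P_0] is weaker than [P_0], so every
    [p(x, .)] is weaker than [P_0]. Conversely, hypoellipticity gives
    [|d^a P_0| <= C |P_0|] at infinity, hence there
    [P_0~ <~ |P_0| <~ |p(x, .)| <= p(x, .)~]. On a ball [P_0~] is bounded while [p(x, .)~]
    stays away from 0, because a derivative of top order of a nonzero polynomial is a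
    nonzero constant. So every [p(x, .)] is equally strong as [P_0]. *)

From Stdlib Require Import Reals Lra Lia Arith Classical FunctionalExtensionality.
From Stdlib Require Fin.
From Coquelicot Require Complex.
Open Scope R_scope.

Lemma sum_upto_rel {A B} (rel : A -> B -> Prop) (addA : A -> A -> A) (addB : B -> B -> B) :
  (forall a b a' b', rel a b -> rel a' b' -> rel (addA a a') (addB b b')) ->
  forall N f g, (forall k, (k <= N)%nat -> rel (f k) (g k)) ->
  rel (sum_upto addA N f) (sum_upto addB N g).
Proof.
  intros Hadd N f g Hfg; induction N as [|N IH]; simpl.
  - apply Hfg; lia.
  - apply Hadd; [apply IH; intros k Hk|]; apply Hfg; lia.
Qed.

Lemma box_sum_rel {A B} (rel : A -> B -> Prop) (addA : A -> A -> A) (addB : B -> B -> B) :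
  (forall a b a' b', rel a b -> rel a' b' -> rel (addA a a') (addB b b')) ->
  forall d N F G, (forall a, rel (F a) (G a)) ->
  rel (box_sum addA d N F) (box_sum addB d N G).
Proof.
  intros Hadd d; induction d as [|d IH]; intros N F G HFG; simpl; [apply HFG|].
  apply (sum_upto_rel rel addA addB Hadd); intros k _; apply IH; intros; apply HFG.
Qed.

Lemma fin_fold_rel {A B} (rel : A -> B -> Prop) (opA : A -> A -> A) (opB : B -> B -> B) zA zB :
  rel zA zB -> (forall a b a' b', rel a b -> rel a' b' -> rel (opA a a') (opB b b')) ->
  forall d f g, (forall i, rel (f i) (g i)) -> rel (fin_fold opA zA d f) (fin_fold opB zB d g).
Proof.
  intros Hz Hop d; induction d as [|d IH]; intros f g Hfg; simpl; [exact Hz|].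
  apply Hop; [apply Hfg | apply IH; intros; apply Hfg].
Qed.

Lemma sum_upto_ext_le {A} (add : A -> A -> A) N f g :
  (forall k, (k <= N)%nat -> f k = g k) -> sum_upto add N f = sum_upto add N g.
Proof. apply (sum_upto_rel eq add add); intros ? ? ? ? -> ->; reflexivity. Qed.

Lemma sum_upto_hom {A B} (addA : A -> A -> A) (addB : B -> B -> B) (h : A -> B) :
  (forall x y, h (addA x y) = addB (h x) (h y)) ->
  forall N f, h (sum_upto addA N f) = sum_upto addB N (fun k => h (f k)).
Proof.
  intros Hh N f.
  apply (sum_upto_rel (fun a b => h a = b)); [intros ? ? ? ? <- <-; apply Hh | reflexivity].
Qed.

Lemma box_sum_hom {A B} (addA : A -> A -> A) (addB : B -> B -> B) (h : A -> B) :
  (forall x y, h (addA x y) = addB (h x) (h y)) ->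
  forall d N F, h (box_sum addA d N F) = box_sum addB d N (fun a => h (F a)).
Proof.
  intros Hh d N F.
  apply (box_sum_rel (fun a b => h a = b)); [intros ? ? ? ? <- <-; apply Hh | reflexivity].
Qed.

Lemma nat_bounded_max (p : nat -> Prop) n0 B :
  p n0 -> (forall n, p n -> (n <= B)%nat) -> exists n, p n /\ forall k, p k -> (k <= n)%nat.
Proof.
  intros Hn0; induction B as [|B IH]; intros HB.
  - exists n0. split; [exact Hn0|]. intros k Hk. specialize (HB k Hk). lia.
  - destruct (classic (p (S B))) as [HS|HS]; [exists (S B); split; auto|].
    apply IH. intros n Hn. specialize (HB n Hn).
    destruct (Nat.eq_dec n (S B)) as [->|]; [contradiction | lia].
Qed.

Lemma mindex0_eq (a b : mindex 0) : a = b.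
Proof. extensionality i. apply (Fin.case0 (fun i => a i = b i)). Qed.

Lemma mcons_eta {d} (a : mindex (S d)) : mcons (a Fin.F1) (fun i => a (Fin.FS i)) = a.
Proof.
  extensionality i. apply (Fin.caseS' i (fun i => mcons _ _ i = a i)); reflexivity.
Qed.

Section BoxSums.
Variables (A : Type) (add : A -> A -> A) (z : A).
Hypothesis add_z : forall x, add x z = x.
Hypothesis add_assoc : forall x y w, add (add x y) w = add x (add y w).
Hypothesis add_comm : forall x y, add x y = add y x.

Lemma sum_upto_split N f g :
  sum_upto add N (fun k => add (f k) (g k)) = add (sum_upto add N f) (sum_upto add N g).
Proof.
  induction N as [|N IH]; simpl; [reflexivity|]. rewrite IH, !add_assoc. f_equal.
  rewrite <- !add_assoc. f_equal. apply add_comm.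
Qed.

Lemma box_sum_split d N F G :
  box_sum add d N (fun a => add (F a) (G a)) = add (box_sum add d N F) (box_sum add d N G).
Proof.
  revert N F G; induction d as [|d IH]; intros N F G; simpl; [reflexivity|].
  rewrite <- sum_upto_split. f_equal; extensionality k. apply IH.
Qed.

Lemma box_sum_sum_upto d N r F :
  box_sum add d N (fun a => sum_upto add r (F a)) =
  sum_upto add r (fun j => box_sum add d N (fun a => F a j)).
Proof. induction r as [|r IH]; simpl; [reflexivity|]. rewrite <- IH. apply box_sum_split. Qed.

Lemma box_sum_eq_unit d N F : (forall a, F a = z) -> box_sum add d N F = z.
Proof.
  intros H. refine (box_sum_rel (fun s (_ : A) => s = z) add add _ d N F F H).
  intros ? ? ? ? -> ->. apply add_z.
Qed.

Lemma sum_upto_single N f : (forall k, (0 < k)%nat -> f k = z) -> sum_upto add N f = f O.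
Proof.
  intros H; induction N as [|N IH]; simpl; [reflexivity|].
  rewrite IH, (H (S N)) by lia. apply add_z.
Qed.

Lemma box_sum_single d N F :
  (forall a, (exists i, a i <> 0%nat) -> F a = z) -> box_sum add d N F = F mzero.
Proof.
  revert N F; induction d as [|d IH]; intros N F H; simpl.
  - f_equal; apply mindex0_eq.
  - rewrite sum_upto_single.
    + rewrite IH; [|intros b [i Hi]; apply H; exists (Fin.FS i); exact Hi].
      f_equal; extensionality i. apply (Fin.caseS' i (fun i => mcons _ _ i = mzero i)); reflexivity.
    + intros k Hk. apply box_sum_eq_unit. intros b. apply H. exists Fin.F1. simpl. lia.
Qed.

Lemma sum_upto_widen N N' f :
  (N <= N')%nat -> (forall k, (N < k)%nat -> f k = z) -> sum_upto add N' f = sum_upto add N f.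
Proof.
  intros Hle H; induction N' as [|N' IH].
  - replace N with O by lia; reflexivity.
  - destruct (Nat.eq_dec N (S N')) as [<-|Hne]; [reflexivity|].
    simpl. rewrite IH, (H (S N')) by lia. apply add_z.
Qed.

Lemma box_sum_widen d N N' F :
  (N <= N')%nat -> (forall a, (exists i, (N < a i)%nat) -> F a = z) ->
  box_sum add d N' F = box_sum add d N F.
Proof.
  revert N N' F; induction d as [|d IH]; intros N N' F Hle H; simpl; [reflexivity|].
  rewrite (sum_upto_widen N N'); [|exact Hle|].
  - f_equal; extensionality k. apply IH; [exact Hle|].
    intros b [i Hi]; apply H; exists (Fin.FS i); exact Hi.
  - intros k Hk. apply box_sum_eq_unit. intros b. apply H. exists Fin.F1. simpl. lia.
Qed.

End BoxSums.

Arguments box_sum_split {A add}.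
Arguments box_sum_sum_upto {A add}.
Arguments box_sum_eq_unit {A add z}.
Arguments box_sum_single {A add z}.
Arguments box_sum_widen {A add z}.

Notation bsum := (box_sum Rplus).

Lemma sum_upto_dominated {T} N (f : nat -> T -> R) (g : T -> R) :
  (forall j, (j <= N)%nat -> exists K, 0 <= K /\ forall t, f j t <= K * g t) ->
  exists K, 0 <= K /\ forall t, sum_upto Rplus N (fun j => f j t) <= K * g t.
Proof.
  intros H; induction N as [|N IH]; [apply H; lia|].
  destruct IH as [K [HK HKf]]; [intros; apply H; lia|].
  destruct (H (S N) (le_n _)) as [K' [HK' HK'f]].
  exists (K + K'). split; [lra|]. intros t; simpl.
  rewrite Rmult_plus_distr_r. specialize (HKf t). specialize (HK'f t). lra.
Qed.

Lemma box_sum_le d N F G : (forall a, F a <= G a) -> bsum d N F <= bsum d N G.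
Proof. apply box_sum_rel. intros; lra. Qed.

Lemma box_sum_nonneg d N F : (forall a, 0 <= F a) -> 0 <= bsum d N F.
Proof.
  intros H. refine (box_sum_rel (fun s (_ : R) => 0 <= s) Rplus Rplus _ d N F F H).
  intros; lra.
Qed.

Lemma sum_upto_ge_term N f k :
  (forall k, 0 <= f k) -> (k <= N)%nat -> f k <= sum_upto Rplus N f.
Proof.
  intros H Hk; induction N as [|N IH]; simpl.
  - replace k with O by lia; lra.
  - destruct (Nat.eq_dec k (S N)) as [->|Hne].
    + enough (0 <= sum_upto Rplus N f) by lra.
      refine (sum_upto_rel (fun s (_ : R) => 0 <= s) Rplus Rplus _ N f f _); intros; [lra | apply H].
    + specialize (IH ltac:(lia)). specialize (H (S N)). lra.
Qed.

Lemma box_sum_ge_term d N F a :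
  (forall a, 0 <= F a) -> (forall i, (a i <= N)%nat) -> F a <= bsum d N F.
Proof.
  revert N F a; induction d as [|d IH]; intros N F a H Ha; simpl.
  - right; f_equal; apply mindex0_eq.
  - rewrite <- (mcons_eta a) at 1.
    eapply Rle_trans.
    { apply (IH N (fun b => F (mcons (a Fin.F1) b))); [intros; apply H | intros; apply Ha]. }
    apply (sum_upto_ge_term N (fun k => bsum d N (fun b => F (mcons k b)))); [|apply Ha].
    intros k; apply box_sum_nonneg; intros; apply H.
Qed.

Lemma fin_prodR_1 d f : (forall i, f i = 1) -> fin_prodR d f = 1.
Proof.
  intros H. refine (fin_fold_rel (fun p (_ : R) => p = 1) Rmult Rmult 1 1 eq_refl _ d f f H).
  intros ? ? ? ? -> ->. ring.
Qed.

Lemma fin_prodR_pos d f : (forall i, 0 < f i) -> 0 < fin_prodR d f.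
Proof.
  apply (fin_fold_rel (fun p (_ : R) => 0 < p) Rmult Rmult 1 1 Rlt_0_1
           (fun _ _ _ _ H H' => Rmult_lt_0_compat _ _ H H') d f f).
Qed.

Lemma Rabs_fin_prodR_le d f g :
  (forall i, Rabs (f i) <= g i) -> Rabs (fin_prodR d f) <= fin_prodR d g.
Proof.
  apply (fin_fold_rel (fun p q => Rabs p <= q) Rmult Rmult 1 1); [rewrite Rabs_R1; lra|].
  intros p q p' q' Hp Hp'. rewrite Rabs_mult.
  apply Rmult_le_compat; auto using Rabs_pos.
Qed.

Lemma fin_sumR_ge_term d f i : (forall i, 0 <= f i) -> f i <= fin_sumR d f.
Proof.
  unfold fin_sumR; revert f i; induction d as [|d IH]; intros f i H.
  - apply (Fin.case0 (fun i => f i <= _) i).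
  - apply (Fin.caseS' i (fun i => f i <= fin_fold Rplus 0 (S d) f)); simpl.
    + enough (0 <= fin_fold Rplus 0 d (fun i => f (Fin.FS i))) by (specialize (H Fin.F1); lra).
      refine (fin_fold_rel (fun s (_ : R) => 0 <= s) Rplus Rplus 0 0 (Rle_refl 0) _
                d _ (fun i => f (Fin.FS i)) (fun _ => H _)).
      intros; lra.
    + intros p. specialize (IH (fun i => f (Fin.FS i)) p (fun _ => H _)).
      specialize (H Fin.F1). lra.
Qed.

Lemma mlen_madd {d} (a b : mindex d) : mlen (madd a b) = (mlen a + mlen b)%nat.
Proof.
  unfold mlen, fin_sumN, madd; revert a b.
  induction d as [|d IH]; intros a b; simpl; [reflexivity|].
  rewrite (IH (fun i => a (Fin.FS i)) (fun i => b (Fin.FS i))). lia.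
Qed.

Lemma mlen_ge_term {d} (a : mindex d) i : (a i <= mlen a)%nat.
Proof.
  unfold mlen, fin_sumN; revert a i; induction d as [|d IH]; intros a i.
  - apply (Fin.case0 (fun i => _) i).
  - apply (Fin.caseS' i (fun i => (a i <= _)%nat)); simpl; [lia|].
    intros p; specialize (IH (fun i => a (Fin.FS i)) p); simpl in IH; lia.
Qed.

Lemma mlen_le_box {d} (a : mindex d) N : (forall i, (a i <= N)%nat) -> (mlen a <= d * N)%nat.
Proof.
  unfold mlen, fin_sumN; revert a; induction d as [|d IH]; intros a H; simpl; [lia|].
  specialize (IH (fun i => a (Fin.FS i)) (fun i => H _)). specialize (H Fin.F1). lia.
Qed.

Lemma Rabs_le_vnorm {d} (xi : Rd d) i : Rabs (xi i) <= vnorm xi.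
Proof.
  unfold vnorm. rewrite <- (sqrt_pow2 (Rabs (xi i))) by apply Rabs_pos.
  apply sqrt_le_1_alt. rewrite pow2_abs.
  apply (fin_sumR_ge_term d (fun i => xi i ^ 2)). intros; apply pow2_ge_0.
Qed.

(** [Cx], [Cadd], [Cmul] and [Cnorm] coincide with Coquelicot's [C], [Cplus], [Cmult], [Cmod]. *)

Lemma Cadd_C0_r a : Cadd a C0 = a.
Proof. destruct a; unfold Cadd, C0; simpl; f_equal; ring. Qed.

Lemma Cadd_assoc a b c : Cadd (Cadd a b) c = Cadd a (Cadd b c).
Proof. unfold Cadd; simpl; f_equal; ring. Qed.

Lemma Cadd_comm a b : Cadd a b = Cadd b a.
Proof. unfold Cadd; f_equal; ring. Qed.

Lemma Cscale_C0 t : Cscale t C0 = C0.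
Proof. unfold Cscale, C0; simpl; f_equal; ring. Qed.

Lemma Cnorm_nonneg a : 0 <= Cnorm a.
Proof. apply sqrt_pos. Qed.

Lemma Cnorm_pos a : a <> C0 -> 0 < Cnorm a.
Proof. apply Complex.Cmod_gt_0. Qed.

Lemma Cnorm_C0 : Cnorm C0 = 0.
Proof. apply Complex.Cmod_0. Qed.

Lemma Cnorm_add_le a b : Cnorm (Cadd a b) <= Cnorm a + Cnorm b.
Proof. apply Complex.Cmod_triangle. Qed.

Lemma Cnorm_mul a b : Cnorm (Cmul a b) = Cnorm a * Cnorm b.
Proof. apply Complex.Cmod_mult. Qed.

Lemma Cnorm_scale t a : Cnorm (Cscale t a) = Rabs t * Cnorm a.
Proof.
  replace (Cscale t a) with (Cmul (t, 0) a) by (unfold Cmul, Cscale; simpl; f_equal; ring).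
  rewrite Cnorm_mul. f_equal. apply Complex.Cmod_R.
Qed.

Lemma Cnorm_sum_upto_le N f :
  Cnorm (sum_upto Cadd N f) <= sum_upto Rplus N (fun k => Cnorm (f k)).
Proof.
  apply (sum_upto_rel (fun a t => Cnorm a <= t)); [|intros; lra].
  intros; eapply Rle_trans; [apply Cnorm_add_le | lra].
Qed.

Lemma Cnorm_box_sum_le d N F : Cnorm (box_sum Cadd d N F) <= bsum d N (fun a => Cnorm (F a)).
Proof.
  apply (box_sum_rel (fun a t => Cnorm a <= t)); [|intros; lra].
  intros; eapply Rle_trans; [apply Cnorm_add_le | lra].
Qed.

Lemma vnorm_nonneg {d} (xi : Rd d) : 0 <= vnorm xi.
Proof. apply sqrt_pos. Qed.

Lemma exists_vnorm_ge {d} (A : R) : exists xi : Rd (S d), vnorm xi >= A.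
Proof.
  exists (fun _ => Rabs A).
  pose proof (Rabs_le_vnorm (fun _ : Fin.t (S d) => Rabs A) Fin.F1) as H.
  cbv beta in H. rewrite Rabs_Rabsolu in H. pose proof (Rle_abs A). lra.
Qed.

Definition poly_nonzero {d} (Q : mpoly d) : Prop := exists a, pcoef Q a <> C0.

Section Polynomials.
Context {d : nat}.

Lemma peval_eq_C0 (Q : mpoly d) xi : (forall b, pcoef Q b = C0) -> peval Q xi = C0.
Proof.
  intros H. apply (box_sum_eq_unit Cadd_C0_r). intros b. rewrite H. apply Cscale_C0.
Qed.

Lemma peval_pderiv_out (Q : mpoly d) a xi :
  (exists i, (pbound Q < a i)%nat) -> peval (pderiv a Q) xi = C0.
Proof.
  intros [i Hi]. apply peval_eq_C0. intros b. simpl. unfold pderiv_coef.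
  rewrite (pcoef_bound d Q (madd a b)); [apply Cscale_C0 | exists i; unfold madd; lia].
Qed.

Lemma peval_pderiv_mzero (Q : mpoly d) xi : peval (pderiv mzero Q) xi = peval Q xi.
Proof.
  unfold peval; simpl. f_equal; extensionality b. unfold pderiv_coef.
  rewrite fin_prodR_1.
  - change (madd mzero b) with b. destruct (pcoef Q b); unfold Cscale; simpl; f_equal; ring.
  - intros i. unfold mzero; simpl. field. apply not_0_INR, fact_neq_0.
Qed.

Lemma Cnorm_peval_le (Q : mpoly d) xi R0 : (forall i, Rabs (xi i) <= R0) ->
  Cnorm (peval Q xi) <= bsum d (pbound Q) (fun b => mono (fun _ => R0) b * Cnorm (pcoef Q b)).
Proof.
  intros H. eapply Rle_trans; [apply Cnorm_box_sum_le|]. apply box_sum_le. intros b.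
  rewrite Cnorm_scale. apply Rmult_le_compat_r; [apply Cnorm_nonneg|].
  apply Rabs_fin_prodR_le. intros i. rewrite <- RPow_abs.
  apply pow_incr. split; [apply Rabs_pos | apply H].
Qed.

Lemma ptilde_nonneg (Q : mpoly d) xi : 0 <= ptilde Q xi.
Proof. apply sqrt_pos. Qed.

Lemma Cnorm_pderiv_le_ptilde (Q : mpoly d) a xi : Cnorm (peval (pderiv a Q) xi) <= ptilde Q xi.
Proof.
  destruct (classic (exists i, (pbound Q < a i)%nat)) as [Hout|Hin].
  - rewrite peval_pderiv_out, Cnorm_C0 by exact Hout. apply ptilde_nonneg.
  - unfold ptilde. rewrite <- (sqrt_pow2 (Cnorm _)) by apply Cnorm_nonneg. apply sqrt_le_1_alt.
    apply (box_sum_ge_term d (pbound Q) (fun a => Cnorm (peval (pderiv a Q) xi) ^ 2) a).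
    + intros; apply pow2_ge_0.
    + intros i. apply Nat.nlt_ge. intros Hi. apply Hin. eauto.
Qed.

Lemma ptilde_le (Q : mpoly d) xi G : (forall a, Cnorm (peval (pderiv a Q) xi) <= G a) ->
  ptilde Q xi <= sqrt (bsum d (pbound Q) (fun a => G a ^ 2)).
Proof.
  intros H. apply sqrt_le_1_alt, box_sum_le. intros a.
  apply pow_incr. split; [apply Cnorm_nonneg | apply H].
Qed.

Lemma ptilde_le_uniform (Q : mpoly d) xi g : (forall a, Cnorm (peval (pderiv a Q) xi) <= g) ->
  ptilde Q xi <= sqrt (bsum d (pbound Q) (fun _ => 1)) * g.
Proof.
  intros H. assert (Hg : 0 <= g) by (eapply Rle_trans; [apply Cnorm_nonneg | apply (H mzero)]).
  eapply Rle_trans; [apply (ptilde_le Q xi (fun _ => g) H)|].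
  replace (sqrt (bsum d (pbound Q) (fun _ => 1)) * g)
    with (sqrt (g ^ 2 * bsum d (pbound Q) (fun _ => 1))).
  - apply sqrt_le_1_alt. right.
    rewrite (box_sum_hom Rplus Rplus (Rmult (g ^ 2))) by (intros; ring).
    f_equal; extensionality a; ring.
  - rewrite sqrt_mult_alt, sqrt_pow2 by (auto using pow2_ge_0). ring.
Qed.

Lemma ptilde_bounded_on_ball (Q : mpoly d) A :
  exists M, 0 <= M /\ forall xi, vnorm xi <= A -> ptilde Q xi <= M.
Proof.
  eexists; split; [apply sqrt_pos|]. intros xi Hxi. apply ptilde_le. intros a.
  apply (Cnorm_peval_le (pderiv a Q) xi A). intros i. pose proof (Rabs_le_vnorm xi i). lra.
Qed.

Lemma pcoef_nonzero_in_box (Q : mpoly d) a : pcoef Q a <> C0 -> forall i, (a i <= pbound Q)%nat.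
Proof. intros H i. apply Nat.nlt_ge. intros Hi. apply H, pcoef_bound. eauto. Qed.

Lemma top_coef (Q : mpoly d) : poly_nonzero Q ->
  exists a, pcoef Q a <> C0 /\ forall b, (mlen a < mlen b)%nat -> pcoef Q b = C0.
Proof.
  intros [a0 Ha0].
  destruct (nat_bounded_max (fun n => exists a, pcoef Q a <> C0 /\ mlen a = n)
              (mlen a0) (d * pbound Q)) as [n [[a [Ha <-]] Hmax]].
  - eauto.
  - intros n [a [Ha <-]]. apply mlen_le_box, pcoef_nonzero_in_box, Ha.
  - exists a. split; [exact Ha|]. intros b Hb. apply NNPP. intros Hb0.
    specialize (Hmax (mlen b) (ex_intro _ b (conj Hb0 eq_refl))). lia.
Qed.

Lemma pderiv_top_const (Q : mpoly d) : poly_nonzero Q ->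
  exists a delta, 0 < delta /\ forall xi, Cnorm (peval (pderiv a Q) xi) = delta.
Proof.
  intros HQ. destruct (top_coef Q HQ) as [a [Ha Htop]].
  set (t := fin_prodR d (fun i => INR (fact (a i + mzero i)) / INR (fact (mzero i)))).
  assert (Ht : 0 < t).
  { apply fin_prodR_pos. intros i. apply Rdiv_lt_0_compat; apply lt_0_INR, lt_O_fact. }
  exists a, (t * Cnorm (pcoef Q a)). split; [apply Rmult_lt_0_compat; auto using Cnorm_pos|].
  intros xi. unfold peval; simpl. rewrite (box_sum_single Cadd_C0_r).
  - unfold pderiv_coef.
    replace (madd a mzero) with a by (extensionality i; unfold madd, mzero; lia).
    replace (mono xi mzero) with 1 by (symmetry; apply fin_prodR_1; reflexivity).
    rewrite !Cnorm_scale, Rabs_R1. fold t. rewrite (Rabs_pos_eq t) by lra. ring.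
  - intros b [i Hi]. unfold pderiv_coef. rewrite Htop; [rewrite !Cscale_C0; reflexivity|].
    rewrite mlen_madd. pose proof (mlen_ge_term b i). lia.
Qed.

Lemma ptilde_lower_bound (Q : mpoly d) : poly_nonzero Q ->
  exists delta, 0 < delta /\ forall xi, delta <= ptilde Q xi.
Proof.
  intros HQ. destruct (pderiv_top_const Q HQ) as [a [delta [Hdelta Hconst]]].
  exists delta. split; [exact Hdelta|]. intros xi. rewrite <- (Hconst xi).
  apply Cnorm_pderiv_le_ptilde.
Qed.

Lemma peval_pderiv_symbol r c (P : nat -> mpoly d) x a xi :
  peval (pderiv a (symbol r c P x)) xi =
  sum_upto Cadd r (fun j => Cmul (c j x) (peval (pderiv a (P j)) xi)).
Proof.
  transitivity (box_sum Cadd d (maxbound r P) (fun b =>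
    sum_upto Cadd r (fun j => Cmul (c j x) (Cscale (mono xi b) (pderiv_coef a (P j) b))))).
  { unfold peval; simpl. f_equal; extensionality b. unfold pderiv_coef; simpl.
    unfold lincomb_coef.
    rewrite !(sum_upto_hom Cadd Cadd (Cscale _))
      by (intros; unfold Cscale, Cadd; simpl; f_equal; ring).
    f_equal; extensionality j. unfold Cscale, Cmul; simpl; f_equal; ring. }
  rewrite box_sum_sum_upto by (exact Cadd_assoc || exact Cadd_comm).
  apply sum_upto_ext_le. intros j Hj. unfold peval; simpl.
  rewrite (box_sum_hom Cadd Cadd (Cmul (c j x)))
    by (intros; unfold Cmul, Cadd; simpl; f_equal; ring).
  apply (box_sum_widen Cadd_C0_r); [apply maxbound_ge, Hj|].
  intros b Hb. rewrite pderiv_coef_bound by exact Hb. unfold Cmul, C0; simpl; f_equal; ring.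
Qed.

Lemma weaker_refl (Q : mpoly d) : weaker Q Q.
Proof. exists 1. split; [lra|]. intros; lra. Qed.

Lemma weaker_trans (Q R S : mpoly d) : weaker Q R -> weaker R S -> weaker Q S.
Proof.
  intros [K1 [HK1 H1]] [K2 [HK2 H2]]. exists (K1 * K2). split; [nra|].
  intros xi. eapply Rle_trans; [apply H1|].
  rewrite Rmult_assoc. apply Rmult_le_compat_l; [lra | apply H2].
Qed.

Lemma weaker_of_pderiv_le (Q R : mpoly d) K : 0 <= K ->
  (forall a xi, Cnorm (peval (pderiv a Q) xi) <= K * ptilde R xi) -> weaker Q R.
Proof.
  intros HK H. set (S0 := sqrt (bsum d (pbound Q) (fun _ => 1))).
  assert (HS0 : 0 <= S0) by apply sqrt_pos.
  exists (S0 * K + 1). split; [nra|]. intros xi.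
  eapply Rle_trans; [apply (ptilde_le_uniform Q xi _ (fun a => H a xi))|].
  pose proof (ptilde_nonneg R xi). fold S0. nra.
Qed.

Lemma symbol_weaker r c (P : nat -> mpoly d) x Q :
  (forall j, (j <= r)%nat -> weaker (P j) Q) -> weaker (symbol r c P x) Q.
Proof.
  intros HP.
  destruct (sum_upto_dominated r
              (fun j (t : mindex d * Rd d) =>
                 Cnorm (c j x) * Cnorm (peval (pderiv (fst t) (P j)) (snd t)))
              (fun t => ptilde Q (snd t))) as [K [HK HKf]].
  { intros j Hj. destruct (HP j Hj) as [Kj [HKj HPj]].
    exists (Cnorm (c j x) * Kj). split; [apply Rmult_le_pos; [apply Cnorm_nonneg | lra]|].
    intros [a xi]; simpl. rewrite Rmult_assoc. apply Rmult_le_compat_l; [apply Cnorm_nonneg|].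
    eapply Rle_trans; [apply Cnorm_pderiv_le_ptilde | apply HPj]. }
  apply (weaker_of_pderiv_le _ _ K HK). intros a xi.
  rewrite peval_pderiv_symbol. eapply Rle_trans; [apply Cnorm_sum_upto_le|].
  eapply Rle_trans; [|apply (HKf (a, xi))]. right.
  f_equal; extensionality j. apply Cnorm_mul.
Qed.

Lemma weaker_of_le_off_ball (Q R : mpoly d) A K : poly_nonzero R -> 0 <= K ->
  (forall xi, vnorm xi >= A -> ptilde Q xi <= K * ptilde R xi) -> weaker Q R.
Proof.
  intros HR HK Hfar.
  destruct (ptilde_bounded_on_ball Q A) as [M [HM Hnear]].
  destruct (ptilde_lower_bound R HR) as [delta [Hdelta Hlow]].
  assert (HMd : 0 <= M / delta).
  { unfold Rdiv. apply Rmult_le_pos; [lra | apply Rlt_le, Rinv_0_lt_compat, Hdelta]. }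
  exists (K + M / delta + 1). split; [lra|]. intros xi.
  pose proof (ptilde_nonneg R xi). pose proof (Hlow xi).
  destruct (Rle_or_lt A (vnorm xi)) as [Hxi|Hxi].
  - specialize (Hfar xi (Rle_ge _ _ Hxi)). nra.
  - specialize (Hnear xi (Rlt_le _ _ Hxi)).
    assert (M <= M / delta * ptilde R xi).
    { replace M with (M / delta * delta) at 1 by (field; lra). apply Rmult_le_compat_l; lra. }
    nra.
Qed.

End Polynomials.

Lemma s_hypoelliptic_pderiv_le {d} s (Q : mpoly d) : s_hypoelliptic s Q ->
  exists C A, 0 <= C /\ forall xi, vnorm xi >= A ->
    forall a, Cnorm (peval (pderiv a Q) xi) <= C * Cnorm (peval Q xi).
Proof.
  intros [rho [C [A [Hrho [_ [_ [HC [_ Hhyp]]]]]]]].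
  exists C, A. split; [lra|]. intros xi Hxi a.
  eapply Rle_trans; [apply Hhyp, Hxi|].
  rewrite <- (Rmult_1_r (C * _)) at 2.
  apply Rmult_le_compat_l; [apply Rmult_le_pos; [lra | apply Cnorm_nonneg]|].
  pose proof (vnorm_nonneg xi). pose proof (pos_INR (mlen a)).
  apply Rle_trans with (Rpower (1 + vnorm xi) 0); [apply Rle_Rpower; nra|].
  rewrite Rpower_O by lra. lra.
Qed.

Lemma poly_nonzero_of_lower_bound {d} (Q R : mpoly (S d)) C A eps :
  poly_nonzero Q -> 0 < eps ->
  (forall xi, vnorm xi >= A ->
     forall a, Cnorm (peval (pderiv a Q) xi) <= C * Cnorm (peval Q xi)) ->
  (forall xi, vnorm xi >= A -> Cnorm (peval R xi) >= eps * Cnorm (peval Q xi)) ->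
  poly_nonzero R.
Proof.
  intros HQ Heps Hder Hlow. apply NNPP. intros HR.
  destruct (pderiv_top_const Q HQ) as [a [delta [Hdelta Hconst]]].
  destruct (exists_vnorm_ge (d := d) A) as [xi Hxi].
  assert (HR0 : peval R xi = C0).
  { apply peval_eq_C0. intros b. apply NNPP. intros Hb. apply HR. exists b. exact Hb. }
  specialize (Hlow xi Hxi). rewrite HR0, Cnorm_C0 in Hlow.
  assert (HQ0 : Cnorm (peval Q xi) = 0) by (pose proof (Cnorm_nonneg (peval Q xi)); nra).
  specialize (Hder xi Hxi a). rewrite Hconst, HQ0 in Hder. lra.
Qed.

Lemma weaker_of_lower_bound {d} (Q R : mpoly (S d)) C A eps :
  poly_nonzero Q -> 0 <= C -> 0 < eps ->
  (forall xi, vnorm xi >= A ->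
     forall a, Cnorm (peval (pderiv a Q) xi) <= C * Cnorm (peval Q xi)) ->
  (forall xi, vnorm xi >= A -> Cnorm (peval R xi) >= eps * Cnorm (peval Q xi)) ->
  weaker Q R.
Proof.
  intros HQ HC Heps Hder Hlow.
  set (S0 := sqrt (bsum (S d) (pbound Q) (fun _ => 1))).
  assert (HS0C : 0 <= S0 * C) by (apply Rmult_le_pos; [apply sqrt_pos | exact HC]).
  apply (weaker_of_le_off_ball Q R A (S0 * C / eps)).
  - exact (poly_nonzero_of_lower_bound Q R C A eps HQ Heps Hder Hlow).
  - unfold Rdiv. apply Rmult_le_pos; [exact HS0C | apply Rlt_le, Rinv_0_lt_compat, Heps].
  - intros xi Hxi.
    eapply Rle_trans; [apply (ptilde_le_uniform Q xi _ (Hder xi Hxi))|]. fold S0.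
    assert (HQR : Cnorm (peval Q xi) <= ptilde R xi / eps).
    { pose proof (Hlow xi Hxi). pose proof (Cnorm_pderiv_le_ptilde R mzero xi) as HR.
      rewrite peval_pderiv_mzero in HR.
      apply (Rmult_le_reg_l eps); [exact Heps|].
      replace (eps * (ptilde R xi / eps)) with (ptilde R xi) by (field; lra). lra. }
    replace (S0 * C / eps * ptilde R xi) with (S0 * C * (ptilde R xi / eps)) by (field; lra).
    rewrite <- Rmult_assoc. apply Rmult_le_compat_l; [exact HS0C | exact HQR].
Qed.

Theorem mainTheorem14 (d : nat) (s : R) (m r : nat)
  (P : nat -> mpoly d) (c : nat -> Rd d -> Cx) :
  s >= 1 ->
  s_hypoelliptic s (P O) ->
  poly_order (P O) m ->
  basis_of_weaker r P ->
  (forall j, (j <= r)%nat -> G1ap (c j)) ->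
  (exists eps A, eps > 0 /\ A >= 0 /\
     forall (xi x : Rd d), vnorm xi >= A ->
       Cnorm (peval (symbol r c P x) xi) >= eps * Cnorm (peval (P O) xi)) ->
  constant_strength (symbol r c P).
Proof.
  intros _ Hhyp Hord Hbasis _ [eps [A [Heps [_ Hlow]]]] x y.
  destruct d as [|d].
  - replace y with x by (extensionality i; apply (Fin.case0 (fun i => x i = y i) i)).
    split; apply weaker_refl.
  - assert (HP0 : poly_nonzero (P O)) by (destruct Hord as [[a [_ Ha]] _]; exists a; exact Ha).
    destruct (s_hypoelliptic_pderiv_le s (P O) Hhyp) as [C [Ah [HC Hder]]].
    assert (Hup : forall x, weaker (symbol r c P x) (P O)).
    { intros x'. apply symbol_weaker, (proj1 Hbasis). }
    assert (Hdown : forall x, weaker (P O) (symbol r c P x)).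
    { intros x'. apply (weaker_of_lower_bound _ _ C (Rmax Ah A) eps HP0 HC Heps);
        intros xi Hxi; [apply Hder | apply Hlow];
        pose proof (Rmax_l Ah A); pose proof (Rmax_r Ah A); lra. }
    split; eapply weaker_trans; [apply Hup | apply Hdown | apply Hup | apply Hdown].
Qed.
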